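(* Let $k,l'$ be positive integers with $l'<k$. Then for every $n$, \[ f(n,k,n-l') \le f(n,l',n-l')+La\big(n,P_{k-l'+1,2^{l'}}\big). \]
   Context: $[n]=\{1,\dots,n\}$. A chain of length $m$ is a sequence of sets $F_1\subsetneq\dots\subsetneq F_m$; a family is $k$-Sperner if it contains no chain of length $k+1$. For a family $\mathcal{F}$ and a set $X$, $\mathcal{F}|_X=\{F\cap X: F\in\mathcal{F}\}$. A family $\mathcal{F}\subseteq 2^{[n]}$ is $l$-trace $k$-Sperner if for every $l$-element $L\subseteq[n]$, $\mathcal{F}|_L$ is $k$-Sperner; $f(n,k,l)$ denotes the maximum size of an $l$-trace $k$-Sperner family $\mathcal{F}\subseteq 2^{[n]}$. A family $\mathcal{F}$ of sets contains a poset $P$ if there is an injective map $i:P\to\mathcal{F}$ such that $p\le_P q$ implies $i(p)\subseteq i(q)$; otherwise $\mathcal{F}$ is $P$-free, and $La(n,P)$ is the maximum size of a $P$-free family $\mathcal{F}\subseteq 2^{[n]}$. For positive integers $h,c$, $T_{h,c}$ is the rooted tree of height $h$ (every root-to-leaf path has $h$ vertices) in which every non-leaf vertex has exactly $c$ children, and $P_{h,c}$ is the poset on the vertices of $T_{h,c}$ whose Hasse diagram is $T_{h,c}$ with all arcs directed towards the root (so each vertex is greater than its children, and the root is the maximum). *)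

From mathcomp Require Import all_boot.
Set Implicit Arguments. Unset Strict Implicit. Unset Printing Implicit Defensive.

Definition trace (T : finType) (F : {set {set T}}) (X : {set T}) : {set {set T}} :=
  [set A :&: X | A in F].

Definition has_chain (T : finType) (G : {set {set T}}) (m : nat) : bool :=
  [exists t : m.-tuple {set T},
     all (fun A => A \in G) (val t) && sorted (fun A B : {set T} => A \proper B) (val t)].

Definition k_sperner (T : finType) (G : {set {set T}}) (k : nat) : bool :=
  ~~ has_chain G k.+1.

Definition trace_k_sperner (n k l : nat) (F : {set {set 'I_n}}) : bool :=
  [forall L : {set 'I_n}, (#|L| == l) ==> k_sperner (trace F L) k].

Definition f (n k l : nat) : nat :=
  \max_(F : {set {set 'I_n}} | trace_k_sperner k l F) #|F|.

Definition contains_poset (P : finType) (le : rel P) (n : nat)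
    (F : {set {set 'I_n}}) : bool :=
  [exists i : {ffun P -> {set 'I_n}},
     [&& injectiveb i, [forall p, i p \in F] &
         [forall p, forall q, le p q ==> (i p \subset i q)]]].

Definition La (P : finType) (le : rel P) (n : nat) : nat :=
  \max_(F : {set {set 'I_n}} | ~~ contains_poset le F) #|F|.

(* Vertices of T_{h,c}: words over 'I_c of length d < h (root = empty word,
   children of w are w ++ [:: j]); every root-to-leaf path has h vertices. *)
Definition tree_vertex (h c : nat) : finType := {d : 'I_h & d.-tuple 'I_c}.

(* Order of P_{h,c}: u <= v iff v is an ancestor of (or equal to) u,
   i.e. the word of v is a prefix of the word of u; the root is the maximum. *)
Definition tree_le (h c : nat) : rel (tree_vertex h c) :=
  fun u v => prefix (val (tagged v)) (val (tagged u)).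

Definition La_tree (n h c : nat) : nat := La (@tree_le h c) n.

From mathcomp Require Import all_boot.
From mathcomp Require Import zify.
Set Implicit Arguments. Unset Strict Implicit. Unset Printing Implicit Defensive.

(* Split F into the tops of copies of P_{k-l'+1,2^l'} in F and the rest; the rest
   is P_{k-l'+1,2^l'}-free. Fix L with |[n] \ L| = l'. At most 2^l' sets share a
   trace on L, so among the 2^l' distinct children of a tree vertex, all strictly
   below it, one has a strictly smaller trace. Descending from a top A thus gives
   k-l'+1 traces forming a chain with maximum A ∩ L, and a chain of l'+1 traces of
   tops starting at A ∩ L would extend it to a chain of k+1 traces of F on L. *)

Lemma has_chainP (T : finType) (G : {set {set T}}) m :
  reflect (exists s : seq {set T}, [/\ size s = m, all (mem G) s
            & sorted (fun A B : {set T} => A \proper B) s]) (has_chain G m).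
Proof.
apply: (iffP existsP) => [[t /andP[Ha Hs]] | [s [Hsz Ha Hs]]].
  by exists (val t); split => //; rewrite size_tuple.
have Hsz' : size s == m by apply/eqP.
by exists (Tuple Hsz'); apply/andP.
Qed.

Lemma sorted_rcons2 (T : Type) (e : rel T) s x y :
  sorted e (rcons s x) -> e x y -> sorted e (rcons (rcons s x) y).
Proof. by move=> sx exy; rewrite -cats1 cat_rcons sorted_cat_cons sx /= exy. Qed.

Lemma traceS (T : finType) (F G : {set {set T}}) (L : {set T}) :
  F \subset G -> trace F L \subset trace G L.
Proof. exact: imsetS. Qed.

Section TraceFibers.

Variables (T : finType) (L : {set T}).

Lemma card_trace_fiber (C : {set T}) : #|[set B | B :&: L == C]| <= 2 ^ #|~: L|.
Proof.
rewrite -card_powerset -(@card_in_imset _ _ (fun B => B :\: L)).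
  apply/subset_leq_card/subsetP => _ /imsetP[B _ ->].
  by rewrite powersetE setDE subsetIr.
move=> B1 B2; rewrite !inE => /eqP B1L /eqP B2L BL.
by rewrite -(setID B1 L) -(setID B2 L) B1L B2L BL.
Qed.

Lemma exists_trace_neq m (U : {set T}) (g : 'I_(2 ^ m) -> {set T}) :
  #|~: L| <= m -> injective g -> (forall x, g x != U) ->
  exists x, g x :&: L != U :&: L.
Proof.
move=> cardL g_inj gU; apply/existsP; apply: contraTT cardL; rewrite negb_exists.
move=> /forallP /= same_trace; rewrite -ltnNge.
pose S := U |: [set g x | x in [set: 'I_(2 ^ m)]].
have S_fiber : S \subset [set B | B :&: L == U :&: L].
  apply/subsetP => B; rewrite !inE => /orP[/eqP -> // | /imsetP[x _ ->]].
  by rewrite -[_ == _]negbK same_trace.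
have card_S : #|S| = (2 ^ m).+1.
  rewrite cardsU1 card_imset // cardsT card_ord.
  suff -> : U \notin [set g x | x in [set: 'I_(2 ^ m)]] by [].
  by apply/imsetP => -[x _ /eqP]; rewrite eq_sym (negbTE (gU x)).
have := leq_trans (subset_leq_card S_fiber) (card_trace_fiber _).
by rewrite card_S ltn_exp2l.
Qed.

End TraceFibers.

(* [contains_poset le F] unfolds to [[exists i, poset_embedding le F i]]. *)
Definition poset_embedding (P : finType) (le : rel P) (T : finType)
    (F : {set {set T}}) (i : {ffun P -> {set T}}) : bool :=
  [&& injectiveb i, [forall p, i p \in F] & [forall p, forall q, le p q ==> (i p \subset i q)]].

Lemma poset_embeddingP (P : finType) (le : rel P) (T : finType) (F : {set {set T}})
    (i : {ffun P -> {set T}}) :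
  reflect [/\ injective i, forall p, i p \in F & forall p q, le p q -> i p \subset i q]
          (poset_embedding le F i).
Proof.
apply: (iffP and3P) => [[/injectiveP i_inj /forallP i_in /'forall_forallP i_mono]|].
  by split=> // p q; apply/implyP.
move=> [/injectiveP i_inj /forallP i_in i_mono]; split=> //.
by apply/'forall_forallP => p q; apply/implyP/i_mono.
Qed.

Definition tree_node h c (w : seq 'I_c) (Hw : size w < h) : tree_vertex h c :=
  existT (fun d : 'I_h => d.-tuple 'I_c) (Ordinal Hw) (@Tuple (size w) 'I_c w (eqxx _)).

Definition tree_root h c : tree_vertex h.+1 c := @tree_node h.+1 c [::] (ltn0Sn h).

Lemma tree_child_le h c (w : seq 'I_c) x (Hw : size w < h) (Hwx : size (rcons w x) < h) :
  tree_le (tree_node Hwx) (tree_node Hw).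
Proof. by rewrite /tree_le /= prefix_rcons. Qed.

Section TreeTraceChain.

Variables (T : finType) (m h : nat) (L : {set T}) (F : {set {set T}}).
Variable i : tree_vertex h (2 ^ m) -> {set T}.
Hypotheses (cardL : #|~: L| <= m) (i_inj : injective i) (i_in : forall v, i v \in F)
  (i_mono : forall u v, tree_le u v -> i u \subset i v).

Lemma trace_chain_below_node j (w : seq 'I_(2 ^ m)) (Hw : size w < h) :
  size w + j = h.-1 ->
  exists s : seq {set T}, [/\ size s = j, all (mem (trace F L)) s
     & sorted (fun A B : {set T} => A \proper B) (rcons s (i (tree_node Hw) :&: L))].
Proof.
elim: j w Hw => [|j IH] w Hw depth_w; first by exists [::].
have Hwx x : size (rcons w x) < h by rewrite size_rcons; lia.
pose child x := i (tree_node (Hwx x)).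
have child_inj : injective child.
  move=> x y /i_inj /(congr1 (fun v => tval (tagged v))) /= /eqP.
  by rewrite eqseq_rcons => /andP[_ /eqP].
have child_neq x : child x != i (tree_node Hw).
  apply/negP => /eqP /i_inj /(congr1 (fun v => size (tval (tagged v)))) /=.
  by rewrite size_rcons; lia.
have [x trace_lt] := exists_trace_neq cardL child_inj child_neq.
have [|s [size_s s_trace s_chain]] := IH _ (Hwx x); first by rewrite size_rcons; lia.
exists (rcons s (child x :&: L)); split.
- by rewrite size_rcons size_s.
- by rewrite all_rcons s_trace andbT; exact: (imset_f (fun A => A :&: L) (i_in _)).
- apply: (sorted_rcons2 s_chain); rewrite properEneq trace_lt.
  exact/setSI/i_mono/tree_child_le.
Qed.

End TreeTraceChain.

Definition tree_tops n h c (F : {set {set 'I_n}}) : {set {set 'I_n}} :=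
  [set A | [exists i, poset_embedding (@tree_le h.+1 c) F i && (i (tree_root h c) == A)]].

Lemma tree_free_off_tops n h c (F : {set {set 'I_n}}) :
  ~~ contains_poset (@tree_le h.+1 c) (F :\: tree_tops h c F).
Proof.
apply/existsP => -[i /poset_embeddingP[i_inj i_in i_mono]].
have /setDP[_] := i_in (tree_root h c); rewrite inE; apply/negP/negPn/existsP.
exists i; rewrite eqxx andbT; apply/poset_embeddingP; split=> // p.
by have /setDP[] := i_in p.
Qed.

Lemma tree_tops_trace_sperner n m h l (F : {set {set 'I_n}}) (L : {set 'I_n}) :
  #|~: L| <= m -> k_sperner (trace F L) (h + l) ->
  k_sperner (trace (F :&: tree_tops h (2 ^ m) F) L) l.
Proof.
move=> cardL F_sperner; apply: contra F_sperner.
move=> /has_chainP[[|A t] [//= size_t /andP[A_trace t_trace] t_chain]].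
have /imsetP[G /setIP[G_in_F]] := A_trace; rewrite inE => /existsP[i].
case/andP=> /poset_embeddingP[i_inj i_in i_mono] /eqP i_root A_def.
have [s [size_s s_trace s_chain]] :=
  trace_chain_below_node cardL i_inj i_in i_mono (j := h) (w := [::]) (ltn0Sn h) erefl.
apply/has_chainP; exists (s ++ A :: t); split.
- by rewrite size_cat size_s /= size_t addnS.
- rewrite all_cat s_trace /= A_def (imset_f (fun B => B :&: L) G_in_F) /=.
  by apply: (sub_all _ t_trace); apply/subsetP/traceS/subsetIl.
- by rewrite (sorted_cat_cons _ s A t) t_chain A_def -i_root s_chain.
Qed.

Theorem theorem3p1 (k l' : nat) (hl' : 0 < l') (hk : l' < k) (n : nat) :
  f n k (n - l') <= f n l' (n - l') + La_tree n (k - l').+1 (2 ^ l').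
Proof.
apply/bigmax_leqP => F F_sperner.
rewrite -(cardsID (tree_tops (k - l') (2 ^ l') F) F); apply: leq_add.
- apply: (leq_bigmax_cond (F := fun G : {set {set 'I_n}} => #|G|)).
  apply/forallP => L; apply/implyP => /eqP cardL.
  have cardCL : #|~: L| <= l' by have := cardsC L; rewrite card_ord cardL; lia.
  apply: (tree_tops_trace_sperner cardCL).
  rewrite subnK; last exact: ltnW.
  by move/forallP/(_ L)/implyP: F_sperner; apply; rewrite cardL.
- apply: (leq_bigmax_cond (F := fun G : {set {set 'I_n}} => #|G|)).
  exact: tree_free_off_tops.
Qed.
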